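(* Let $n,m\in\mathbb{N}$. Let $X_1,\ldots,X_n,Y_1,\ldots,Y_m$ be real-valued random variables that are GTAI. Let $\Theta_1,\ldots,\Theta_n,\Delta_1,\ldots,\Delta_m$ be non-negative random variables, none degenerate at zero, arbitrarily dependent among themselves, each with distribution whose support is bounded from above (i.e. there are constants $b_i,d_j\in(0,\infty)$ with $\mathbb{P}(\Theta_i\le b_i)=\mathbb{P}(\Delta_j\le d_j)=1$), and such that the vector $(\Theta_1,\ldots,\Theta_n,\Delta_1,\ldots,\Delta_m)$ is independent of $(X_1,\ldots,X_n,Y_1,\ldots,Y_m)$. Then the products $\Theta_1X_1,\ldots,\Theta_nX_n,\Delta_1Y_1,\ldots,\Delta_mY_m$ are GTAI.
   Context: GTAI (generalized tail asymptotic independence): real-valued random variables $X_1,\ldots,X_n,Y_1,\ldots,Y_m$, whose distributions have supports unbounded from above, are called GTAI if (i) $\lim_{x_i\wedge x_k\wedge y_j\to\infty}\mathbb{P}(|X_i|>x_i\mid X_k>x_k,\,Y_j>y_j)=0$ for all $1\le i\neq k\le n$ and $j=1,\ldots,m$, and (ii) $\lim_{x_i\wedge y_j\wedge y_k\to\infty}\mathbb{P}(|Y_j|>y_j\mid X_i>x_i,\,Y_k>y_k)=0$ for all $1\le j\neq k\le m$ and $i=1,\ldots,n$. Here $a\wedge b=\min\{a,b\}$. *)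

From HB Require Import structures.
From mathcomp Require Import all_boot all_order all_algebra.
From mathcomp Require Import all_classical all_reals all_analysis.
Set Implicit Arguments. Unset Strict Implicit. Unset Printing Implicit Defensive.
Import Order.TTheory GRing.Theory Num.Theory.
Local Open Scope classical_set_scope.
Local Open Scope ring_scope.

(* Conditional probability P(A | B) = P(A ∩ B) / P(B)  (real-valued;
   by the MathComp convention x / 0 = 0 it is 0 when P(B) = 0). *)
Definition condP d (T : measurableType d) (R : realType)
  (P : probability T R) (A B : set T) : R :=
  fine (P (A `&` B)) / fine (P B).

Definition tail_lim0_3 (R : realType) (f : R -> R -> R -> R) : Prop :=
  forall e : R, 0 < e -> exists M : R, forall a b c : R,
    M < a -> M < b -> M < c -> `|f a b c| < e.

Definition unbounded_above d (T : measurableType d) (R : realType)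
  (P : probability T R) (Z : T -> R) : Prop :=
  forall x : R, (0 < P [set t | (x < Z t)%R])%E.

Definition GTAI d (T : measurableType d) (R : realType) (P : probability T R)
  (n m : nat) (X : 'I_n -> T -> R) (Y : 'I_m -> T -> R) : Prop :=
  [/\ (forall i, unbounded_above P (X i)),
      (forall j, unbounded_above P (Y j)),
      (forall (i k : 'I_n) (j : 'I_m), i != k ->
         tail_lim0_3 (fun xi xk yj =>
           condP P [set t | xi < `|X i t|]
                   ([set t | xk < X k t] `&` [set t | yj < Y j t])))
    & (forall (j k : 'I_m) (i : 'I_n), j != k ->
         tail_lim0_3 (fun yj xi yk =>
           condP P [set t | yj < `|Y j t|]
                   ([set t | xi < X i t] `&` [set t | yk < Y k t])))].

(* Independence of the random vector (U_1..U_p, V_1..V_q) from the random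
   vector (W_1..W_r, Z_1..Z_s): the joint law factorises on all products of
   Borel sets (measurable rectangles, which generate the product sigma-algebra). *)
Definition indep_vectors d (T : measurableType d) (R : realType)
  (P : probability T R) (p q r s : nat)
  (U : 'I_p -> T -> R) (V : 'I_q -> T -> R)
  (W : 'I_r -> T -> R) (Z : 'I_s -> T -> R) : Prop :=
  forall (A : 'I_p -> set R) (B : 'I_q -> set R)
         (C : 'I_r -> set R) (D : 'I_s -> set R),
    (forall i, measurable (A i)) -> (forall j, measurable (B j)) ->
    (forall i, measurable (C i)) -> (forall j, measurable (D j)) ->
    let E1 := [set t | (forall i, A i (U i t)) /\ (forall j, B j (V j t))] in
    let E2 := [set t | (forall i, C i (W i t)) /\ (forall j, D j (Z j t))] in
    P (E1 `&` E2) = (P E1 * P E2)%E.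

From HB Require Import structures.
From mathcomp Require Import all_boot all_order all_algebra.
From mathcomp Require Import all_classical all_reals all_analysis.
From mathcomp Require Import lra zify.

(* GTAI asks for tail bounds P(|W| > a, U1 > b, U2 > c) <= eps P(U1 > b, U2 > c)
   for all thresholds beyond some M.  By independence such a bound survives
   intersecting both sides with any event {Z1 in I1, Z2 in I2} on the multipliers.
   A multiplier Z with values in (0, b] is then absorbed by discretising it on the
   dyadic cells {(k+1) 2^-n <= Z < (k+2) 2^-n}: on a cell, {U > x 2^n / (k+1)}
   is a threshold event beyond M (as x > M b) contained in {Z U > x}, these
   inner approximations increase with n and exhaust {Z U > x}, so countable
   additivity and continuity from below carry the bound over to {Z U > x}.  The
   factor in |Zw W| > a only needs its almost sure bound: it forces |W| > a / bw.
   Unboundedness of Theta X follows from P(Theta > l) > 0 for some l > 0. *)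

Set Implicit Arguments.
Unset Strict Implicit.
Unset Printing Implicit Defensive.
Import Order.TTheory GRing.Theory Num.Theory.
Local Open Scope classical_set_scope.
Local Open Scope ring_scope.

Section measurable_level_sets.
Context {d : measure_display} {T : measurableType d} {R : realType}.
Context {f : T -> R} (mf : measurable_fun setT f).

Lemma measurable_preimage_set {B : set R} :
  measurable B -> measurable [set t | B (f t)].
Proof. by move=> mB; have := mf measurableT mB; rewrite setTI. Qed.

Lemma measurable_gt_fun (x : R) : measurable [set t | x < f t].
Proof.
by have := measurable_preimage_set (measurable_itv `]x, +oo[); rewrite set_itvoy.
Qed.

Lemma measurable_lt_fun (x : R) : measurable [set t | f t < x].
Proof.
by have := measurable_preimage_set (measurable_itv `]-oo, x[); rewrite set_itvNyo.
Qed.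

Lemma measurable_ge_fun (x : R) : measurable [set t | x <= f t].
Proof.
by have := measurable_preimage_set (measurable_itv `[x, +oo[); rewrite set_itvcy.
Qed.

Lemma measurable_le_fun (x : R) : measurable [set t | f t <= x].
Proof.
by have := measurable_preimage_set (measurable_itv `]-oo, x]); rewrite set_itvNyc.
Qed.

End measurable_level_sets.

Ltac measurable_fun_tac := first [ assumption
  | apply: measurable_realfun.measurable_funM; measurable_fun_tac
  | apply: (measurableT_comp (@measurable_realfun.normr_measurable _ setT));
    measurable_fun_tac
  | exact: measurable_id ].

Ltac measurable_set_tac := repeat first [ assumption | apply: measurableI
  | apply: measurable_gt_fun; measurable_fun_tac
  | apply: measurable_lt_fun; measurable_fun_tac
  | apply: measurable_ge_fun; measurable_fun_tac
  | apply: measurable_le_fun; measurable_fun_tac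
  | apply: measurable_preimage_set; [measurable_fun_tac|assumption] ].

Section probability_facts.
Context {d : measure_display} {T : measurableType d} {R : realType}.
Variable P : probability T R.

Lemma measureIr_full (A E : set T) : measurable A -> measurable E ->
  P E = 1%E -> P (A `&` E) = P A.
Proof.
move=> mA mE PE; apply/le_anti/andP; split; first exact: measureIl.
have mAE : measurable (A `&` E) by exact: measurableI.
have mAC : measurable (A `&` ~` E) by apply: measurableI => //; exact: measurableC.
have nullC : (P (A `&` ~` E) <= 0)%E.
  have PC : P (~` E) = 0%E by rewrite probability_setC // PE subee.
  by rewrite -PC; exact: measureIr mA (measurableC mE).
rewrite {1}(_ : A = (A `&` E) `|` (A `&` ~` E)); last first.
  by rewrite -setIUr setUCr setIT.
apply: le_trans (measureU2 _ mAE mAC) _.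
by apply: le_trans (leeD2l _ nullC) _; rewrite adde0.
Qed.

Lemma measureI_le_of_condP (A B : set T) (e : R) : measurable A -> measurable B ->
  `|condP P A B| < e -> (P (A `&` B) <= e%:E * P B)%E.
Proof.
rewrite /condP => mA mB condP_lt.
have PB0 : 0 <= fine (P B) by apply/fine_ge0/measure_ge0.
have PAB0 : 0 <= fine (P (A `&` B)) by apply/fine_ge0/measure_ge0.
have PABB : fine (P (A `&` B)) <= fine (P B).
  by apply: fine_le; rewrite ?fin_num_measure //; [exact: measurableI|exact: measureIr].
rewrite -(fineK (fin_num_measure _ _ (measurableI _ _ mA mB))).
rewrite -(fineK (fin_num_measure _ _ mB)) -EFinM lee_fin.
have [PBz|PBn0] := eqVneq (fine (P B)) 0.
  by rewrite PBz in PABB *; rewrite mulr0.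
have PB_gt0 : 0 < fine (P B) by rewrite lt_def PBn0.
by move: condP_lt; rewrite ger0_norm ?divr_ge0 // ltr_pdivrMr // => /ltW.
Qed.

Lemma condP_lt_of_measureI (A B : set T) (eps e : R) : measurable A -> measurable B ->
  0 <= eps -> eps < e -> (P (A `&` B) <= eps%:E * P B)%E -> `|condP P A B| < e.
Proof.
rewrite /condP => mA mB eps0 epse.
rewrite -(fineK (fin_num_measure _ _ (measurableI _ _ mA mB))).
rewrite -(fineK (fin_num_measure _ _ mB)) -EFinM lee_fin => hAB.
have PB0 : 0 <= fine (P B) by apply/fine_ge0/measure_ge0.
have PAB0 : 0 <= fine (P (A `&` B)) by apply/fine_ge0/measure_ge0.
have [->|PBn0] := eqVneq (fine (P B)) 0; first by rewrite invr0 mulr0 normr0; lra.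
have PB_gt0 : 0 < fine (P B) by rewrite lt_def PBn0.
rewrite ger0_norm ?divr_ge0 // ltr_pdivrMr //.
by apply: le_lt_trans hAB _; rewrite ltr_pM2r.
Qed.

Lemma exists_level_gt0 (Z : T -> R) : measurable_fun setT Z ->
  P [set t | 0 <= Z t] = 1%E -> P [set t | Z t = 0] != 1%E ->
  exists2 l : R, 0 < l & (0 < P [set t | (l < Z t)%R])%E.
Proof.
move=> mZ Z_ge0 Z_not0; apply: contrapT => no_level.
have null_level k : P [set t | k.+1%:R^-1 < Z t] = 0%E.
  apply/eqP; rewrite eq_le measure_ge0 andbT leNgt; apply/negP => pos.
  by apply: no_level; exists k.+1%:R^-1.
have null_pos : (P [set t | (0 < Z t)%R] <= 0)%E.
  rewrite -(@eseries0 R (fun k => P [set t | k.+1%:R^-1 < Z t]) 0%N xpredT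
    (fun k _ _ => null_level k)).
  apply: measure_sigma_subadditive => [k||]; try exact: measurable_gt_fun.
  move=> t /= Zt; exists (Num.truncn (Z t)^-1) => //=.
  by rewrite -[ltRHS]invrK ltf_pV2 ?posrE ?invr_gt0 //; exact: truncnS_gt.
have mZ0 : measurable [set t | Z t = 0].
  by have := measurable_preimage_set mZ (measurable_set1 0).
move/negP: Z_not0; apply; apply/eqP/le_anti; rewrite probability_le1 //=.
rewrite -Z_ge0 (_ : [set t | 0 <= Z t] = [set t | Z t = 0] `|` [set t | 0 < Z t]).
  apply: le_trans (measureU2 _ mZ0 (measurable_gt_fun mZ 0)) _.
  by apply: le_trans (leeD2l _ null_pos) _; rewrite adde0.
apply/seteqP; split=> t /=; last by case=> [->|/ltW].
by rewrite le_eqVlt => /orP[/eqP <-|]; [left|right].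
Qed.

Lemma unbounded_above_mul (Z W : T -> R) :
  measurable_fun setT Z -> measurable_fun setT W ->
  P [set t | 0 <= Z t] = 1%E -> P [set t | Z t = 0] != 1%E ->
  (forall I B : set R, measurable I -> measurable B ->
     P ([set t | I (Z t)] `&` [set t | B (W t)]) =
     (P [set t | I (Z t)] * P [set t | B (W t)])%E) ->
  unbounded_above P W -> unbounded_above P (fun t => Z t * W t).
Proof.
move=> mZ mW Z_ge0 Z_not0 indep W_unb x.
have [l l0 Pl] := exists_level_gt0 mZ Z_ge0 Z_not0.
have c0 : 0 <= `|x| / l by rewrite divr_ge0 // ltW.
apply: (@lt_le_trans _ _ (P ([set t | l < Z t] `&` [set t | `|x| / l < W t]))).
  rewrite (indep [set r | l < r] [set r | `|x| / l < r]);
    try exact: (measurable_gt_fun (@measurable_id _ _ setT)).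
  exact: mule_gt0 Pl (W_unb _).
apply: le_measure; rewrite ?inE; try by measurable_set_tac.
move=> t [/= Zl Wl]; have W0 : 0 < W t := le_lt_trans c0 Wl.
by move: Wl; rewrite ltr_pdivrMr // => Wl; have := ler_norm x; nra.
Qed.

End probability_facts.

Section dyadic_grid.
Context {R : archiRealFieldType}.

Definition dyadic_cell (b : R) (n k : nat) : set R :=
  [set z | k%:R + 1 <= z * 2 ^+ n] `&` [set z | z * 2 ^+ n < k%:R + 2] `&`
  [set z | z <= b].

Definition dyadic_cutoff (x : R) (n k : nat) : R := x * 2 ^+ n / (k%:R + 1).

Lemma natr1_gt0 (k : nat) : 0 < k%:R + 1 :> R.
Proof. by have := ler0n R k; lra. Qed.

Lemma dyadic_cell_uniq b n k j z :
  dyadic_cell b n k z -> dyadic_cell b n j z -> k = j.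
Proof.
move=> [[/= kz zk] _] [[/= jz zj] _].
have : (k + 1 < j + 2)%N by rewrite -(ltr_nat R) !natrD; lra.
have : (j + 1 < k + 2)%N by rewrite -(ltr_nat R) !natrD; lra.
lia.
Qed.

Lemma dyadic_cell_refine b n k z : dyadic_cell b n k z ->
  exists2 k', dyadic_cell b n.+1 k' z & (2 * (k + 1) <= k' + 1)%N.
Proof.
move=> [[/= kz zk] zb].
have zS : z * 2 ^+ n.+1 = 2 * (z * 2 ^+ n) by rewrite exprS mulrCA.
have [lo|hi] := ltP (2 * (z * 2 ^+ n)) (2 * k%:R + 3).
  exists (2 * k + 1)%N; last lia.
  by split; [split|] => //=; rewrite zS natrD natrM; lra.
exists (2 * k + 2)%N; last lia.
by split; [split|] => //=; rewrite zS natrD natrM; lra.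
Qed.

Lemma dyadic_cutoff_le x n k k' : 0 <= x -> (2 * (k + 1) <= k' + 1)%N ->
  dyadic_cutoff x n.+1 k' <= dyadic_cutoff x n k.
Proof.
move=> x0 kk'; have k1 := natr1_gt0 k; have k'1 := natr1_gt0 k'.
rewrite /dyadic_cutoff exprS ler_pdivrMr // mulrAC ler_pdivlMr //.
have x2n : 0 <= x * 2 ^+ n by rewrite mulr_ge0 // exprn_ge0.
have : 2 * (k%:R + 1) <= k'%:R + 1 :> R.
  by move: kk'; rewrite -(ler_nat R) !natrD; lra.
nra.
Qed.

Lemma dyadic_cutoff_gt b M x n k z :
  dyadic_cell b n k z -> 0 < x -> M * b < x -> M < dyadic_cutoff x n k.
Proof.
move=> [[/= kz _] zb] x0 Mbx; rewrite /dyadic_cutoff ltr_pdivlMr ?natr1_gt0 //.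
have p0 : 0 < (2 : R) ^+ n by rewrite exprn_gt0.
have [M0|M0] := ltP M 0; first by have := natr1_gt0 k; nra.
have : M * (k%:R + 1) <= M * (z * 2 ^+ n) by rewrite ler_wpM2l.
have : M * z <= M * b by rewrite ler_wpM2l.
nra.
Qed.

Lemma dyadic_cutoff_mul_gt b x n k z u :
  dyadic_cell b n k z -> 0 < x -> dyadic_cutoff x n k < u -> x < z * u.
Proof.
move=> [[/= kz _] _] x0; rewrite /dyadic_cutoff ltr_pdivrMr ?natr1_gt0 // => xu.
have p0 : 0 < (2 : R) ^+ n by rewrite exprn_gt0.
have u0 : 0 < u by have := natr1_gt0 k; nra.
rewrite -(ltr_pM2r p0); nra.
Qed.

Lemma dyadic_cover b x z u : 0 < z -> z <= b -> 0 < x -> x < z * u ->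
  exists n k, dyadic_cell b n k z /\ dyadic_cutoff x n k < u.
Proof.
move=> z0 zb x0 xzu.
have u0 : 0 < u by nra.
pose n := (Num.truncn (u / (z * u - x))).+1.
have margin : u < (z * u - x) * 2 ^+ n.
  rewrite -ltr_pdivrMl ?subr_gt0 // mulrC.
  apply: lt_le_trans (truncnS_gt _) _.
  by rewrite -natrX ler_nat ltnW // ltn_expl.
have p0 : 0 < (2 : R) ^+ n by rewrite exprn_gt0.
have w0 : 0 <= z * 2 ^+ n by nra.
set m := Num.truncn (z * 2 ^+ n).
have /andP[mz zm] := truncn_itv w0; rewrite -/m -natr1 in mz zm.
have m0 : (0 < m)%N by rewrite lt0n; apply/negP => /eqP m0; rewrite m0 in zm; nra.
have mS : m.-1%:R + 1 = m%:R :> R by rewrite natr1 prednK.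
exists n, m.-1; rewrite /dyadic_cutoff mS; split; first by split; [split|] => /=; lra.
have m1 : 0 < m%:R :> R by rewrite ltr0n.
by rewrite ltr_pdivrMr // mulrC; nra.
Qed.

End dyadic_grid.

Lemma measurable_dyadic_cell {R : realType} (b : R) n k :
  measurable (dyadic_cell b n k).
Proof.
have m2n : measurable_fun setT (fun z : R => z * 2 ^+ n).
  exact: measurable_realfun.measurable_funM.
by rewrite /dyadic_cell; measurable_set_tac.
Qed.

Section dyadic_domination.
Context {d : measure_display} {T : measurableType d} {R : realType}.
Variables (P : probability T R) (Z U : T -> R) (G H : set T) (eps M b x : R).
Hypotheses (mZ : measurable_fun setT Z) (mU : measurable_fun setT U).
Hypotheses (mG : measurable G) (mH : measurable H).
Hypotheses (x0 : 0 < x) (Mbx : M * b < x) (eps0 : 0 <= eps).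
Hypothesis dominated : forall (I : set R) (c : R), measurable I -> M < c ->
  (P (G `&` ([set t | I (Z t)] `&` [set t | (c < U t)%R])) <=
   eps%:E * P (H `&` ([set t | I (Z t)] `&` [set t | (c < U t)%R])))%E.

Let F n k := [set t | dyadic_cell b n k (Z t)] `&` [set t | dyadic_cutoff x n k < U t].
Let D n := \bigcup_k F n k.

Let measurable_F n k : measurable (F n k).
Proof.
apply: measurableI; last exact: measurable_gt_fun.
exact: measurable_preimage_set (measurable_dyadic_cell b n k).
Qed.

Let measurable_D n : measurable (D n).
Proof. exact: bigcupT_measurable. Qed.

Lemma dominated_dyadic n : (P (G `&` D n) <= eps%:E * P (H `&` D n))%E.
Proof.
have disjoint (A : set T) : trivIset setT (fun k => A `&` F n k).
  move=> k j _ _ [t [[_ [/= tk _]] [_ [/= tj _]]]].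
  exact: dyadic_cell_uniq tk tj.
rewrite /D !setI_bigcupr !measure_bigcup //; try by move=> k _; exact: measurableI.
rewrite -nneseriesZl; last by move=> *; exact: measure_ge0.
apply: lee_nneseries => [k _ _|k _]; first exact: measure_ge0.
have [Mc|cM] := boolP (M < dyadic_cutoff x n k).
  exact: dominated (measurable_dyadic_cell b n k) Mc.
suff -> : G `&` F n k = set0 by rewrite measure0; apply: mule_ge0; rewrite ?lee_fin.
apply/seteqP; split => // t [_ [/= tk _]].
by move/negP: cM; apply; exact: dyadic_cutoff_gt tk x0 Mbx.
Qed.

Lemma dyadic_sub_mul_gt n : D n `<=` [set t | x < Z t * U t].
Proof. by move=> t [k _ [/= tk ck]]; exact: dyadic_cutoff_mul_gt tk x0 ck. Qed.

Lemma dyadic_subS n : D n `<=` D n.+1.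
Proof.
move=> t [k _ [/= tk ck]]; have [k' tk' kk'] := dyadic_cell_refine tk.
exists k' => //; split => //=.
exact: le_lt_trans (dyadic_cutoff_le n (ltW x0) kk') ck.
Qed.

Lemma dyadic_cover_set :
  [set t | 0 < Z t] `&` [set t | Z t <= b] `&` [set t | x < Z t * U t] `<=`
  \bigcup_n D n.
Proof.
move=> t [[/= Z0 Zb] xZU]; have [n [k [tk ck]]] := dyadic_cover Z0 Zb x0 xZU.
by exists n => //; exists k.
Qed.

Lemma dominated_mul_bounded :
  (P (G `&` (([set t | (0 < Z t)%R] `&` [set t | (Z t <= b)%R]) `&`
             [set t | (x < Z t * U t)%R])) <=
   eps%:E * P (H `&` [set t | (x < Z t * U t)%R]))%E.
Proof.
have mGD n : measurable (G `&` D n) by exact: measurableI.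
have GD_nd : {homo (fun n => G `&` D n) : n m / (n <= m)%N >-> (n <= m)%O}.
  apply/nondecreasing_seqP => n; rewrite subsetEset.
  by apply: setIS; exact: dyadic_subS.
have GD_cvg := nondecreasing_cvg_mu (mu := P) mGD (bigcupT_measurable _ mGD) GD_nd.
apply: (@le_trans _ _ (P (\bigcup_n (G `&` D n)))).
  apply: le_measure; rewrite ?inE; [by measurable_set_tac|exact: bigcupT_measurable|].
  by rewrite -setI_bigcupr; apply: setIS; exact: dyadic_cover_set.
rewrite -(cvg_lim _ GD_cvg) //; apply: lime_le; first by apply/cvgP: GD_cvg.
apply: nearW => n; apply: le_trans (dominated_dyadic n) _.
apply: lee_wpmul2l; first by rewrite lee_fin.
apply: le_measure; rewrite ?inE; [exact: measurableI|by measurable_set_tac|].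
by apply: setIS; exact: dyadic_sub_mul_gt.
Qed.

End dyadic_domination.

Lemma gt_scaled_threshold {R : realFieldType} (M b1 b2 b3 a : R) :
  0 < b1 -> 0 < b2 -> 0 < b3 -> `|M| * (b1 + b2 + b3) + 1 < a ->
  [/\ 0 < a, M * b1 < a, M * b2 < a & M * b3 < a].
Proof. by move=> *; have := ler_norm M; have := normr_ge0 M; split; nra. Qed.

Section scaled_tail.
Context {d : measure_display} {T : measurableType d} {R : realType}.
Variables (P : probability T R) (Zw Z1 Z2 W U1 U2 : T -> R) (bw b1 b2 : R).
Hypotheses (mZw : measurable_fun setT Zw) (mZ1 : measurable_fun setT Z1)
  (mZ2 : measurable_fun setT Z2) (mW : measurable_fun setT W)
  (mU1 : measurable_fun setT U1) (mU2 : measurable_fun setT U2).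
Hypotheses (bw0 : 0 < bw) (b10 : 0 < b1) (b20 : 0 < b2).
Hypotheses (Zw_ge0 : P [set t | 0 <= Zw t] = 1%E)
  (Zw_le : P [set t | Zw t <= bw] = 1%E).
Hypotheses (Z1_ge0 : P [set t | 0 <= Z1 t] = 1%E)
  (Z1_le : P [set t | Z1 t <= b1] = 1%E).
Hypotheses (Z2_ge0 : P [set t | 0 <= Z2 t] = 1%E)
  (Z2_le : P [set t | Z2 t <= b2] = 1%E).
Hypothesis indep : forall I1 I2 Bw B1 B2 : set R,
  measurable I1 -> measurable I2 -> measurable Bw -> measurable B1 -> measurable B2 ->
  P (([set t | I1 (Z1 t)] `&` [set t | I2 (Z2 t)]) `&`
     ([set t | Bw (W t)] `&` ([set t | B1 (U1 t)] `&` [set t | B2 (U2 t)]))) =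
  (P ([set t | I1 (Z1 t)] `&` [set t | I2 (Z2 t)]) *
   P ([set t | Bw (W t)] `&` ([set t | B1 (U1 t)] `&` [set t | B2 (U2 t)])))%E.

Section fixed_thresholds.
Variables (eps M a x y : R).
Hypotheses (eps0 : 0 <= eps) (Ma : M < a) (Mx : M * b1 < x) (My : M * b2 < y).
Hypotheses (x0 : 0 < x) (y0 : 0 < y).
Hypothesis dominated : forall a b c : R, M < a -> M < b -> M < c ->
  (P ([set t | (a < `|W t|)%R] `&`
      ([set t | (b < U1 t)%R] `&` [set t | (c < U2 t)%R])) <=
   eps%:E * P ([set t | (b < U1 t)%R] `&` [set t | (c < U2 t)%R]))%E.

Let Wa := [set t | a < `|W t|].
Let A1 (I : set R) (c : R) := [set t | I (Z1 t)] `&` [set t | c < U1 t].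
Let S1 := ([set t | 0 < Z1 t] `&` [set t | Z1 t <= b1]) `&` [set t | x < Z1 t * U1 t].
Let S2 := ([set t | 0 < Z2 t] `&` [set t | Z2 t <= b2]) `&` [set t | y < Z2 t * U2 t].

Let measurable_gt (c : R) : measurable [set r : R | c < r].
Proof. by rewrite -set_itvoy; exact: measurable_itv. Qed.

Lemma dominated_indep I1 c1 I c :
  measurable I1 -> measurable I -> M < c1 -> M < c ->
  (P ((Wa `&` A1 I1 c1) `&` ([set t | I (Z2 t)] `&` [set t | (c < U2 t)%R])) <=
   eps%:E * P (A1 I1 c1 `&` ([set t | I (Z2 t)] `&` [set t | (c < U2 t)%R])))%E.
Proof.
move=> mI1 mI Mc1 Mc.
(* independence factors P (Z1 in I1, Z2 in I) out of both sides *)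
have mWa := measurable_gt_fun (@measurable_realfun.normr_measurable R setT) a.
rewrite (_ : (Wa `&` A1 I1 c1) `&` _ =
    ([set t | I1 (Z1 t)] `&` [set t | I (Z2 t)]) `&`
    ([set t | a < `|W t|] `&` ([set t | c1 < U1 t] `&` [set t | c < U2 t]))); last first.
  by apply/seteqP; split=> t; rewrite /Wa /A1 /=; tauto.
rewrite (_ : A1 I1 c1 `&` _ =
    ([set t | I1 (Z1 t)] `&` [set t | I (Z2 t)]) `&`
    ([set t | setT (W t)] `&` ([set t | c1 < U1 t] `&` [set t | c < U2 t]))); last first.
  by apply/seteqP; split=> t; rewrite /Wa /A1 /=; tauto.
rewrite (indep mI1 mI mWa (measurable_gt c1) (measurable_gt c)).
rewrite (indep mI1 mI measurableT (measurable_gt c1) (measurable_gt c)).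
rewrite (_ : [set t | setT (W t)] `&` _ = [set t | c1 < U1 t] `&` [set t | c < U2 t]);
  last by apply/seteqP; split=> t /=; tauto.
by rewrite muleCA; apply: lee_wpmul2l; [exact: measure_ge0|exact: dominated].
Qed.

Lemma dominated_scaled2 I c : measurable I -> M < c ->
  (P ((Wa `&` A1 I c) `&` S2) <=
   eps%:E * P (A1 I c `&` [set t | (y < Z2 t * U2 t)%R]))%E.
Proof.
move=> mI Mc; apply: (dominated_mul_bounded mZ2 mU2 _ _ y0 My eps0);
  try by rewrite /Wa /A1; measurable_set_tac.
by move=> I' c' mI' Mc'; exact: dominated_indep.
Qed.

Lemma dominated_scaled12 :
  (P ((Wa `&` S2) `&` S1) <=
   eps%:E * P ([set t | (y < Z2 t * U2 t)%R] `&` [set t | (x < Z1 t * U1 t)%R]))%E.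
Proof.
apply: (dominated_mul_bounded mZ1 mU1 _ _ x0 Mx eps0);
  try by rewrite /Wa /S2; measurable_set_tac.
move=> I c mI Mc; have := dominated_scaled2 mI Mc.
rewrite (_ : (Wa `&` A1 I c) `&` S2 = (Wa `&` S2) `&` A1 I c); last first.
  by apply/seteqP; split=> t; rewrite /Wa /A1 /=; tauto.
by rewrite (setIC (A1 I c)); apply.
Qed.

End fixed_thresholds.

Lemma tail_dominated_scaled (eps M a x y : R) : 0 <= eps ->
  (forall a b c : R, M < a -> M < b -> M < c ->
    (P ([set t | (a < `|W t|)%R] `&`
        ([set t | (b < U1 t)%R] `&` [set t | (c < U2 t)%R])) <=
     eps%:E * P ([set t | (b < U1 t)%R] `&` [set t | (c < U2 t)%R]))%E) ->
  M * bw < a -> M * b1 < x -> M * b2 < y -> 0 < x -> 0 < y ->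
  (P ([set t | (a < `|Zw t * W t|)%R] `&`
      ([set t | (x < Z1 t * U1 t)%R] `&` [set t | (y < Z2 t * U2 t)%R])) <=
   eps%:E * P ([set t | (x < Z1 t * U1 t)%R] `&` [set t | (y < Z2 t * U2 t)%R]))%E.
Proof.
move=> eps0 dominated Ma Mx My x0 y0.
have Ma' : M < a / bw by rewrite ltr_pdivlMr.
rewrite (setIC [set t | (x < _)%R]).
apply: le_trans (dominated_scaled12 eps0 Ma' Mx My x0 y0 dominated).
pose E := [set t | 0 <= Zw t] `&` [set t | Zw t <= bw] `&` [set t | 0 <= Z1 t] `&`
  [set t | Z1 t <= b1] `&` [set t | 0 <= Z2 t] `&` [set t | Z2 t <= b2].
have mE : measurable E by rewrite /E; measurable_set_tac.
have E_full : P E = 1%E by rewrite /E !measureIr_full //; measurable_set_tac.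
rewrite -(measureIr_full _ mE E_full); last by measurable_set_tac.
apply: le_measure; rewrite ?inE; [by measurable_set_tac|by measurable_set_tac|].
(* on E, |Zw W| > a forces |W| > a / bw, and x < Z1 U1 forces Z1 > 0 *)
move=> t [[/= aZwW [yZ2 xZ1]] [[[[[/= Zw0 Zwb] Z10] Z1b] Z20] Z2b]].
have Z1_gt0 : 0 < Z1 t.
  by rewrite lt_def Z10 andbT; apply/eqP => Z1t0; rewrite Z1t0 mul0r in xZ1; lra.
have Z2_gt0 : 0 < Z2 t.
  by rewrite lt_def Z20 andbT; apply/eqP => Z2t0; rewrite Z2t0 mul0r in yZ2; lra.
split; [split; [|by split]|by split].
rewrite /= ltr_pdivrMr //; apply: lt_le_trans aZwW _.
by rewrite normrM ger0_norm // mulrC ler_wpM2l.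
Qed.

Lemma tail_lim0_condP_scaled :
  tail_lim0_3 (fun a b c =>
    condP P [set t | a < `|W t|] ([set t | b < U1 t] `&` [set t | c < U2 t])) ->
  tail_lim0_3 (fun a b c =>
    condP P [set t | a < `|Zw t * W t|]
      ([set t | b < Z1 t * U1 t] `&` [set t | c < Z2 t * U2 t])).
Proof.
move=> lim0 e e0; have e20 : 0 < e / 2 by rewrite divr_gt0.
have [M limM] := lim0 _ e20.
exists (`|M| * (bw + b1 + b2) + 1) => a x y ha hx hy.
have [_ Ma _ _] := gt_scaled_threshold bw0 b10 b20 ha.
have [x0 _ Mx _] := gt_scaled_threshold bw0 b10 b20 hx.
have [y0 _ _ My] := gt_scaled_threshold bw0 b10 b20 hy.
apply: (condP_lt_of_measureI _ _ (ltW e20));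
  [by measurable_set_tac|by measurable_set_tac|lra|].
apply: tail_dominated_scaled (ltW e20) _ Ma Mx My x0 y0 => a' b' c' Ma' Mb' Mc'.
by apply: measureI_le_of_condP; try by measurable_set_tac; exact: limM.
Qed.

End scaled_tail.

Section coordinate_events.
Context {d : measure_display} {T : measurableType d} {R : realType}.

Definition cylinder (p : nat) (U : 'I_p -> T -> R) (A : 'I_p -> set R) : set T :=
  [set t | forall i, A i (U i t)].

Definition coord_set (p : nat) (i : 'I_p) (S : set R) : 'I_p -> set R :=
  fun l => if l == i then S else setT.

Lemma measurable_coord_set p (i : 'I_p) S :
  measurable S -> forall l, measurable (coord_set i S l).
Proof. by move=> mS l; rewrite /coord_set; case: eqP. Qed.

Lemma measurable_coord_setI p (i k : 'I_p) (S S' : set R) :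
  measurable S -> measurable S' ->
  forall l, measurable (coord_set i S l `&` coord_set k S' l).
Proof. by move=> mS mS' l; apply: measurableI; exact: measurable_coord_set. Qed.

Lemma cylinder_coord p (U : 'I_p -> T -> R) i S :
  cylinder U (coord_set i S) = [set t | S (U i t)].
Proof.
apply/seteqP; split=> t /=; first by move/(_ i); rewrite /coord_set eqxx.
by move=> Ut l; rewrite /coord_set; case: eqP => [->|].
Qed.

Lemma cylinder_setI p (U : 'I_p -> T -> R) A B :
  cylinder U (fun l => A l `&` B l) = cylinder U A `&` cylinder U B.
Proof. by apply/seteqP; split=> t /=; [move=> AB; split=> l; case: (AB l)|case]. Qed.

Lemma cylinder_setT p (U : 'I_p -> T -> R) : cylinder U (fun=> setT) = setT.
Proof. by apply/seteqP; split. Qed.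

Variables (P : probability T R) (p q r s : nat).
Variables (U : 'I_p -> T -> R) (V : 'I_q -> T -> R).
Variables (W : 'I_r -> T -> R) (Z : 'I_s -> T -> R).
Hypothesis indep : indep_vectors P U V W Z.

Lemma indep_vectors_cylinder A B C D :
  (forall i, measurable (A i)) -> (forall j, measurable (B j)) ->
  (forall i, measurable (C i)) -> (forall j, measurable (D j)) ->
  P ((cylinder U A `&` cylinder V B) `&` (cylinder W C `&` cylinder Z D)) =
  (P (cylinder U A `&` cylinder V B) * P (cylinder W C `&` cylinder Z D))%E.
Proof. exact: indep. Qed.

Lemma indep_vectors_coord_fst i j (I B : set R) : measurable I -> measurable B ->
  P ([set t | I (U i t)] `&` [set t | B (W j t)]) =
  (P [set t | I (U i t)] * P [set t | B (W j t)])%E.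
Proof.
move=> mI mB; have := indep_vectors_cylinder (measurable_coord_set i mI)
  (fun=> measurableT) (measurable_coord_set j mB) (fun=> measurableT).
by rewrite !cylinder_coord !cylinder_setT !setIT.
Qed.

Lemma indep_vectors_coord_snd i j (I B : set R) : measurable I -> measurable B ->
  P ([set t | I (V i t)] `&` [set t | B (Z j t)]) =
  (P [set t | I (V i t)] * P [set t | B (Z j t)])%E.
Proof.
move=> mI mB; have := indep_vectors_cylinder (fun=> measurableT)
  (measurable_coord_set i mI) (fun=> measurableT) (measurable_coord_set j mB).
by rewrite !cylinder_coord !cylinder_setT !setTI.
Qed.

End coordinate_events.

Theorem lemma2p1 (d : measure_display) (T : measurableType d) (R : realType)
  (P : probability T R) (n m : nat)
  (X : 'I_n -> T -> R) (Y : 'I_m -> T -> R)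
  (Theta : 'I_n -> T -> R) (Delta : 'I_m -> T -> R) :
  (forall i, measurable_fun [set: T] (X i)) ->
  (forall j, measurable_fun [set: T] (Y j)) ->
  (forall i, measurable_fun [set: T] (Theta i)) ->
  (forall j, measurable_fun [set: T] (Delta j)) ->
  GTAI P X Y ->
  (forall i, P [set t | 0 <= Theta i t] = 1%E) ->
  (forall j, P [set t | 0 <= Delta j t] = 1%E) ->
  (forall i, P [set t | Theta i t = 0] != 1%E) ->
  (forall j, P [set t | Delta j t = 0] != 1%E) ->
  (forall i, exists2 b : R, 0 < b & P [set t | Theta i t <= b] = 1%E) ->
  (forall j, exists2 b : R, 0 < b & P [set t | Delta j t <= b] = 1%E) ->
  indep_vectors P Theta Delta X Y ->
  GTAI P (fun i t => Theta i t * X i t) (fun j t => Delta j t * Y j t).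
Proof.
move=> mX mY mTh mDe [X_unb Y_unb X_tail Y_tail] Th_ge0 De_ge0 Th_not0 De_not0
  Th_bd De_bd indep.
split.
- move=> i; apply: unbounded_above_mul (mTh i) (mX i) (Th_ge0 i) (Th_not0 i) _ (X_unb i).
  exact: (indep_vectors_coord_fst indep i i).
- move=> j; apply: unbounded_above_mul (mDe j) (mY j) (De_ge0 j) (De_not0 j) _ (Y_unb j).
  exact: (indep_vectors_coord_snd indep j j).
- move=> i k j ik.
  have [bw bw0 Bw] := Th_bd i; have [b1 b10 B1] := Th_bd k; have [b2 b20 B2] := De_bd j.
  apply: (tail_lim0_condP_scaled (mTh i) (mTh k) (mDe j) (mX i) (mX k) (mY j)
    bw0 b10 b20 (Th_ge0 i) Bw (Th_ge0 k) B1 (De_ge0 j) B2 _ (X_tail i k j ik)).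
  move=> I1 I2 Iw I1' I2' mI1 mI2 mIw mI1' mI2'.
  have := indep_vectors_cylinder indep (measurable_coord_set k mI1)
    (measurable_coord_set j mI2) (measurable_coord_setI i k mIw mI1')
    (measurable_coord_set j mI2').
  by rewrite cylinder_setI !cylinder_coord -!(setIA [set t | Iw (X i t)]).
- move=> j k i jk.
  have [bw bw0 Bw] := De_bd j; have [b1 b10 B1] := Th_bd i; have [b2 b20 B2] := De_bd k.
  apply: (tail_lim0_condP_scaled (mDe j) (mTh i) (mDe k) (mY j) (mX i) (mY k)
    bw0 b10 b20 (De_ge0 j) Bw (Th_ge0 i) B1 (De_ge0 k) B2 _ (Y_tail j k i jk)).
  move=> I1 I2 Iw I1' I2' mI1 mI2 mIw mI1' mI2'.
  have := indep_vectors_cylinder indep (measurable_coord_set i mI1)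
    (measurable_coord_set k mI2) (measurable_coord_set i mI1')
    (measurable_coord_setI j k mIw mI2').
  by rewrite cylinder_setI !cylinder_coord !(setICA [set t | I1' (X i t)]).
Qed.
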